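(* Let $K=\{x\in\mathbb C:|x|=1\}$ with its Borel $\sigma$-algebra $\mathcal Q$, let $A_1=\{e^{i\varphi}:\varphi\in[0,\pi)\}$, $A_2=\{e^{i\varphi}:\varphi\in[\pi,2\pi)\}$, and let $\Delta=\{1,2\}$ with its power set $\mathcal D$. Fix $a\in K$, let $f:K\to K$, $f(x)=ax$, and $g:K\to\Delta$, $g(x)=k$ for $x\in A_k$. Let $T$ be the generator with $T(x,\cdot)=\delta_{(f(x),g(f(x)))}$. If $a$ is not a root of unity, then $\sigma_Q(T)$ equals the Borel $\sigma$-algebra of $K$.
   Context: A generator $[(Q,\mathcal Q),T,(\Delta,\mathcal D)]$ consists of measurable spaces $(Q,\mathcal Q)$ and $(\Delta,\mathcal D)$ and a Markov transition kernel $T$ from $(Q,\mathcal Q)$ to $(Q\times\Delta,\mathcal Q\otimes\mathcal D)$. $\sigma_Q(T)$ denotes the smallest $\sigma$-subalgebra $\mathcal A$ of $\mathcal Q$ such that for every $C\in\mathcal A\otimes\mathcal D$ the function $x\mapsto T(x,C)$ is $\mathcal A$-measurable. *)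

From HB Require Import structures.
From mathcomp Require Import all_boot all_order all_algebra.
From mathcomp Require Import all_classical all_reals all_analysis.
Set Implicit Arguments. Unset Strict Implicit. Unset Printing Implicit Defensive.
Import Order.TTheory GRing.Theory Num.Theory.
Local Open Scope classical_set_scope.
Local Open Scope ring_scope.

(* Complex numbers are modelled as pairs (re, im) in R * R; the Borel
   sigma-algebra of C = R^2 is the product Borel sigma-algebra on R * R. *)
Section Circle.
Variable R : realType.

Definition cmul (z w : R * R) : R * R :=
  (z.1 * w.1 - z.2 * w.2, z.1 * w.2 + z.2 * w.1).

Fixpoint cpow (z : R * R) (n : nat) : R * R :=
  if n is n'.+1 then cmul z (cpow z n') else (1, 0).

Definition circ_root_of_unity (z : R * R) : Prop :=
  exists n : nat, (0 < n)%N /\ cpow z n = (1, 0).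

Definition Kset : set (R * R) := [set p | p.1 ^+ 2 + p.2 ^+ 2 = 1].

(* Q = Borel sigma-algebra of K (trace of the Borel sets of C on K) *)
Definition Qsig : set (set (R * R)) :=
  [set B | measurable B /\ B `<=` Kset].

Definition A1 : set (R * R) :=
  [set (cos phi, sin phi) | phi in `[0, pi[%classic].
Definition A2 : set (R * R) :=
  [set (cos phi, sin phi) | phi in `[pi, pi *+ 2[%classic].

Inductive Delta := d1 | d2.

Definition f (a : R * R) (x : R * R) : R * R := cmul a x.

(* g x = k for x in A_k; A1, A2 partition K *)
Definition g (x : R * R) : Delta := if x \in A1 then d1 else d2.

Definition T (a : R * R) (x : R * R) (C : set ((R * R) * Delta)) : R :=
  \1_C (f a x, g (f a x)).

(* product sigma-algebra A (x) D on K x Delta, D = power set of Delta *)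
Definition prod_sigma (A : set (set (R * R))) : set (set ((R * R) * Delta)) :=
  <<s Kset `*` setT,
      [set C | exists X Y, A X /\ C = X `*` Y] >>.

Definition A_measurable (A : set (set (R * R))) (h : R * R -> R) : Prop :=
  forall B : set R, measurable B -> A (Kset `&` (h @^-1` B)).

Definition admissible (a : R * R) (A : set (set (R * R))) : Prop :=
  [/\ sigma_algebra Kset A, A `<=` Qsig &
      forall C, prod_sigma A C -> A_measurable A (fun x => T a x C)].

Definition sigmaQ (a : R * R) : set (set (R * R)) :=
  [set B | forall A, admissible a A -> A B].

End Circle.

(* Write each x in K as x = expi (angle x), where expi u = (cos u, sin u) and
   angle x lies in [0, 2 pi), and write a = expi t.  Testing T against the
   rectangles X * Delta and K * {1} shows that every admissible sigma-algebra
   A is stable under preimages by the rotation x |-> a x and contains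
   {x | a x \in A1}; hence it contains {x | a^n x \in A1} for all n >= 1,
   which in angles is the half circle [s_n, s_n + pi) with s_n = - n t mod
   2 pi.  Since a is not a root of unity the s_n are dense in [0, 2 pi)
   (pigeonhole principle), so differences of two such half circles give all
   arcs, and A contains every Borel subset of K.  Conversely Q itself is
   admissible because the rotation is Borel measurable and A1 is a Borel set. *)

From HB Require Import structures.
From mathcomp Require Import all_boot all_order all_algebra.
From mathcomp Require Import all_classical all_reals all_analysis.
From mathcomp Require Import measurable_realfun ring lra.
Import Order.TTheory GRing.Theory Num.Theory.
Set Implicit Arguments. Unset Strict Implicit. Unset Printing Implicit Defensive.
Local Open Scope classical_set_scope.
Local Open Scope ring_scope.

#[local] Arguments Kset {R}.
#[local] Arguments A1 {R}.
#[local] Arguments Qsig {R}.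
#[local] Arguments g {R}.

Lemma sigma_algebra_image_into (aT rT : Type) (D : set aT) (E : set rT)
    (F : aT -> rT) (G : set (set aT)) :
  (forall x, D x -> E (F x)) -> sigma_algebra D G ->
  sigma_algebra E (image_set_system D F G).
Proof.
move=> DE G_sigma; have [G0 GC GU] := sigma_algebra_image F G_sigma.
split => // C GDC; have := GC C GDC; congr G; apply/seteqP.
by split => x [Dx [_ nCx]]; split => //; split => //; exact: DE.
Qed.

Section angles.
Variable R : realType.

Definition twopi : R := pi *+ 2.

Definition mod2pi (x : R) : R := x - (Num.floor (x / twopi))%:~R * twopi.

Lemma twopiE : twopi = pi + pi.
Proof. exact: mulr2n. Qed.

Lemma twopi_gt0 : 0 < twopi.
Proof. by rewrite twopiE addr_gt0 ?pi_gt0. Qed.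

Lemma mod2pi_ge0 x : 0 <= mod2pi x.
Proof. by rewrite subr_ge0 -ler_pdivlMr ?twopi_gt0 // floor_le. Qed.

Lemma mod2pi_lt x : mod2pi x < twopi.
Proof.
have := floorD1_gt (x / twopi).
rewrite ltr_pdivrMr ?twopi_gt0 // rmorphD /= mulrDl mul1r /mod2pi; lra.
Qed.

Lemma mod2pi_id x : 0 <= x < twopi -> mod2pi x = x.
Proof.
move=> /andP[x_ge0 x_lt]; rewrite /mod2pi.
suff -> : Num.floor (x / twopi) = 0 by rewrite mul0r subr0.
apply: floor_def; rewrite add0r divr_ge0 ?(ltW twopi_gt0) //=.
by rewrite ltr_pdivrMr ?twopi_gt0 // mul1r.
Qed.

Lemma mod2piDz x (z : int) : mod2pi (x + z%:~R * twopi) = mod2pi x.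
Proof.
rewrite /mod2pi mulrDl mulfK ?(gt_eqF twopi_gt0) // floorDrz ?intr_int //.
rewrite intrKfloor rmorphD /=; ring.
Qed.

Lemma mod2piP x : exists z : int, mod2pi x = x + z%:~R * twopi.
Proof. by exists (- Num.floor (x / twopi)); rewrite /mod2pi rmorphN /=; ring. Qed.

Lemma mod2piDml x y : mod2pi (mod2pi x + y) = mod2pi (x + y).
Proof.
have [z ->] := mod2piP x.
by rewrite -(mod2piDz (x + y) z); congr mod2pi; ring.
Qed.

Lemma mod2piBmr x y : mod2pi (x - mod2pi y) = mod2pi (x - y).
Proof.
have [z ->] := mod2piP y.
by rewrite -(mod2piDz (x - y) (- z)) rmorphN /=; congr mod2pi; ring.
Qed.

Lemma mod2piMnmr (n : nat) y : mod2pi (n%:R * mod2pi y) = mod2pi (n%:R * y).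
Proof.
have [z ->] := mod2piP y.
by rewrite -(mod2piDz (n%:R * y) (z * n%:Z)) intrM /=; congr mod2pi; ring.
Qed.

Lemma mod2pi_mod2pi x : mod2pi (mod2pi x) = mod2pi x.
Proof. by rewrite mod2pi_id // mod2pi_ge0 mod2pi_lt. Qed.

Lemma mod2pi_neg x : - twopi <= x < 0 -> mod2pi x = x + twopi.
Proof.
move=> /andP[? ?]; rewrite -(mod2piDz x 1) mul1r mod2pi_id //; apply/andP; split; lra.
Qed.

Lemma mod2piN x : mod2pi x != 0 -> mod2pi (- x) = twopi - mod2pi x.
Proof.
move=> x_neq0; have mx_ge0 := mod2pi_ge0 x; have mx_lt := mod2pi_lt x.
rewrite -(sub0r x) -mod2piBmr sub0r mod2pi_neg; first lra.
by move: x_neq0; rewrite neq_lt => /orP[] ?; apply/andP; split; lra.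
Qed.

Definition expi (x : R) : R * R := (cos x, sin x).

Lemma Kset_expi x : Kset (expi x).
Proof. by rewrite /Kset /= cos2Dsin2. Qed.

Lemma cmul_expi x y : cmul (expi x) (expi y) = expi (x + y).
Proof. by rewrite /cmul /expi /= cosD sinD; congr pair; ring. Qed.

Lemma expi0 : expi 0 = (1, 0).
Proof. by rewrite /expi cos0 sin0. Qed.

Lemma expiDz x (z : int) : expi (x + z%:~R * twopi) = expi x.
Proof.
have expiDn y (n : nat) : expi (y + n%:R * twopi) = expi y.
  by rewrite /expi mulr_natl (periodicn (@cosD2pi R)) (periodicn (@sinD2pi R)).
case: z => n; first exact: expiDn.
rewrite NegzE -(expiDn _ n.+1) rmorphN /=; congr expi; ring.
Qed.

Lemma expi_mod2pi x : expi (mod2pi x) = expi x.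
Proof. by have [z ->] := mod2piP x; rewrite expiDz. Qed.

Lemma sin_lt0_pi x : pi < x < twopi -> sin x < 0.
Proof.
move=> /andP[pi_lt x_lt]; rewrite -[x](subrK pi) sinDpi oppr_lt0.
by apply: sin_gt0_pi; rewrite twopiE in x_lt; apply/andP; split; lra.
Qed.

Lemma expi_eq1 x : expi x = (1, 0) -> mod2pi x = 0.
Proof.
rewrite -expi_mod2pi; have := mod2pi_ge0 x; have := mod2pi_lt x.
move: (mod2pi x) => v v_lt v_ge0 [cosv sinv].
have [->//|v_neq0] := eqVneq v 0.
have v_gt0 : 0 < v by rewrite lt_neqAle eq_sym v_neq0.
case: (ltgtP v pi) => [v_ltpi|pi_ltv|v_pi].
- by have := @sin_gt0_pi R v; rewrite v_gt0 v_ltpi sinv ltxx => /(_ isT).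
- by have := @sin_lt0_pi v; rewrite pi_ltv v_lt sinv ltxx => /(_ isT).
- by move: cosv; rewrite v_pi cospi; lra.
Qed.

Lemma expi_inj x y : expi x = expi y -> mod2pi x = mod2pi y.
Proof.
move=> exy; have : expi (x - y) = (1, 0) by rewrite -cmul_expi exy cmul_expi subrr expi0.
by move=> /expi_eq1 xy0; rewrite -[x](subrK y) -mod2piDml xy0 add0r.
Qed.

Definition angle (p : R * R) : R :=
  mod2pi (if 0 <= p.2 then acos p.1 else - acos p.1).

Lemma angle_itv p : 0 <= angle p < twopi.
Proof. by rewrite mod2pi_ge0 mod2pi_lt. Qed.

Lemma expi_angle p : Kset p -> expi (angle p) = p.
Proof.
case: p => p1 p2; rewrite /Kset /angle expi_mod2pi /= => p_unit.
have p1_itv : -1 <= p1 <= 1 by apply/andP; split; nra.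
have sin_acos_p1 : sin (acos p1) = `|p2|.
  by rewrite sin_acos // -sqrtr_sqr; congr Num.sqrt; rewrite -p_unit; ring.
have cos_acos_p1 : cos (acos p1) = p1 by rewrite acosK // in_itv.
rewrite /expi; case: ifPn => [p2_ge0|p2_lt0].
  by rewrite cos_acos_p1 sin_acos_p1 ger0_norm.
by rewrite cosN sinN cos_acos_p1 sin_acos_p1 ltr0_norm ?opprK // ltNge.
Qed.

Lemma angle_expi x : angle (expi x) = mod2pi x.
Proof.
by rewrite -(expi_inj (expi_angle (Kset_expi x))) /angle mod2pi_mod2pi.
Qed.

Lemma A1_angle p : A1 p <-> Kset p /\ angle p < pi.
Proof.
split=> [[phi /= + <-]|[Kp p_ltpi]].
  rewrite in_itv /= => /andP[phi_ge0 phi_ltpi]; split; first exact: Kset_expi.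
  rewrite angle_expi mod2pi_id // phi_ge0 twopiE; have := pi_gt0 R; lra.
exists (angle p); last exact: expi_angle.
by rewrite /= in_itv /=; have /andP[-> _] := angle_itv p.
Qed.

Lemma ltpi_expi v : 0 <= v < twopi -> v < pi <-> expi v = (1, 0) \/ 0 < sin v.
Proof.
move=> /andP[v_ge0 v_lt]; split => [v_ltpi|[/expi_eq1|sin_gt0]].
- have [->|v_neq0] := eqVneq v 0; first by left; rewrite expi0.
  by right; apply: sin_gt0_pi; rewrite v_ltpi lt0r v_neq0 v_ge0.
- by rewrite mod2pi_id ?v_ge0 // => ->; exact: pi_gt0.
- rewrite ltNge; apply/negP; rewrite le_eqVlt => /orP[/eqP pi_v|pi_lt].
    by move: sin_gt0; rewrite -pi_v sinpi ltxx.
  by have := @sin_lt0_pi v; rewrite pi_lt v_lt => /(_ isT); lra.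
Qed.

Lemma cpow_expi (t : R) n : cpow (expi t) n = expi (n%:R * t).
Proof.
elim: n => [|n IHn] /=; first by rewrite mul0r expi0.
by rewrite IHn cmul_expi -natr1 mulrDl mul1r addrC.
Qed.

Lemma iter_cmul_expi (t x : R) n : iter n (cmul (expi t)) (expi x) = expi (x + n%:R * t).
Proof.
elim: n => [|n IHn] /=; first by rewrite mul0r addr0.
by rewrite IHn cmul_expi -natr1; congr expi; ring.
Qed.

End angles.
Arguments twopi {R}.
Arguments expi {R}.
Arguments angle {R}.

Section density.
Variable R : realType.

Lemma truncn_eq_dist (x y : R) : 0 <= x -> 0 <= y ->
  Num.truncn x = Num.truncn y -> `|x - y| < 1.
Proof.
move=> x_ge0 y_ge0 xy; have /andP[x1 x2] := truncn_itv x_ge0.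
have /andP[y1 y2] := truncn_itv y_ge0; rewrite xy in x1 x2.
by rewrite -natr1 in x2 y2; rewrite ltr_norml; apply/andP; split; lra.
Qed.

Lemma pigeonhole_close (x : nat -> R) (L eps : R) (N : nat) :
  (forall i, 0 <= x i < L) -> L < N%:R * eps ->
  exists i j, (i < j)%N /\ `|x i - x j| < eps.
Proof.
move=> x_itv L_lt; have L_gt0 : 0 < L by have /andP[] := x_itv 0%N; apply: le_lt_trans.
have N_gt0 : 0 < N%:R :> R.
  by rewrite ltr0n lt0n; apply: contraTneq L_lt => ->; rewrite mul0r -leNgt ltW.
pose scaled i := x i * N%:R / L.
have scaled_ge0 i : 0 <= scaled i.
  by have /andP[? _] := x_itv i; rewrite divr_ge0 ?mulr_ge0 // ltW.
have bin_lt (i : 'I_N.+1) : (Num.truncn (scaled i) < N)%N.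
  have /andP[_ xL] := x_itv i.
  by rewrite truncn_lt_nat // ltr_pdivrMr // mulrC ltr_pM2l.
pose bin (i : 'I_N.+1) : 'I_N := Ordinal (bin_lt i).
have [i [j [bin_ij ij]]] : exists i j, bin i = bin j /\ (i < j)%N.
  have /injectivePn[i [j ij bin_ij]] : ~~ injectiveb bin.
    by apply/negP => /injectiveP/leq_card; rewrite !card_ord ltnn.
  case: (ltngtP i j) => [|ji|/val_inj ij_eq]; [by exists i, j|by exists j, i|].
  by rewrite ij_eq eqxx in ij.
exists i, j; split => //.
have scaledB : scaled i - scaled j = (x i - x j) * (N%:R / L).
  by rewrite /scaled; field; rewrite gt_eqF.
have := truncn_eq_dist (scaled_ge0 i) (scaled_ge0 j) (congr1 val bin_ij).
rewrite scaledB normrM (ger0_norm (divr_ge0 (ltW N_gt0) (ltW L_gt0))).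
rewrite -ltr_pdivlMr ?divr_gt0 // div1r invf_div => /lt_trans; apply.
by rewrite ltr_pdivrMr // mulrC.
Qed.

Lemma multiples_hit (d c eps : R) : 0 < d < eps -> 0 <= c ->
  exists j, (0 < j)%N /\ c < j%:R * d < c + eps.
Proof.
move=> /andP[d_gt0 d_lt] c_ge0.
have /andP[lo hi] := truncn_itv (divr_ge0 c_ge0 (ltW d_gt0)).
rewrite ler_pdivlMr // in lo; rewrite ltr_pdivrMr // in hi.
exists (Num.truncn (c / d)).+1; split => //; rewrite hi /= -natr1 mulrDl mul1r.
by rewrite -ltrBrDr; apply: le_lt_trans lo _; lra.
Qed.

Lemma mod2pi_orbit_neq0 (t : R) : ~ circ_root_of_unity (expi t) ->
  forall n, (0 < n)%N -> mod2pi (n%:R * t) != 0.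
Proof.
move=> t_irr n n_gt0; apply/eqP => tn0; apply: t_irr; exists n; split => //.
by rewrite cpow_expi -expi_mod2pi tn0 expi0.
Qed.

Section irrational_rotation.
Variable t : R.
Hypothesis t_irr : forall n, (0 < n)%N -> mod2pi (n%:R * t) != 0.

Lemma small_rotation (eps : R) : 0 < eps -> exists k, (0 < k)%N /\
  (0 < mod2pi (k%:R * t) < eps \/ 0 < mod2pi (- (k%:R * t)) < eps).
Proof.
move=> eps_gt0; pose x i := mod2pi (i%:R * t).
have x_itv i : 0 <= x i < twopi by rewrite mod2pi_ge0 mod2pi_lt.
have := truncnS_gt (twopi / eps); rewrite ltr_pdivrMr // => N_big.
have [i [j [ij xij]]] := pigeonhole_close x_itv N_big.
have kt : (j - i)%N%:R * t = j%:R * t - i%:R * t by rewrite natrB ?(ltnW ij) // mulrBl.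
have x_ji : mod2pi ((j - i)%N%:R * t) = mod2pi (x j - x i).
  by rewrite kt mod2piDml mod2piBmr.
have x_ij : mod2pi (- ((j - i)%N%:R * t)) = mod2pi (x i - x j).
  by rewrite kt opprB mod2piDml mod2piBmr.
have k_gt0 : (0 < j - i)%N by rewrite subn_gt0.
exists (j - i)%N; split => //; move: (t_irr k_gt0) xij; rewrite x_ji x_ij.
have := x_itv i; have := x_itv j; move: (x i) (x j) => xi xj /andP[? ?] /andP[? ?].
rewrite ltr_norml => xji_neq0 /andP[? ?].
case: (ltgtP xi xj) => [?|?|xij_eq].
- by left; rewrite mod2pi_id; apply/andP; split; lra.
- by right; rewrite mod2pi_id; apply/andP; split; lra.
- by rewrite xij_eq subrr mod2pi_id ?lexx ?twopi_gt0 ?eqxx in xji_neq0.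
Qed.

Lemma orbit_dense (c eps : R) : 0 <= c -> 0 < eps -> c + eps <= twopi ->
  exists k, (0 < k)%N /\ c < mod2pi (- (k%:R * t)) < c + eps.
Proof.
move=> c_ge0 eps_gt0 ceps.
have [k [k_gt0 [d_small|d_small]]] := small_rotation eps_gt0;
  have /andP[d_gt0 d_lt] := d_small.
- have [|j [j_gt0 /andP[lo hi]]] := multiples_hit (c := twopi - c - eps) d_small.
    by lra.
  have jd : mod2pi (j%:R * (k%:R * t)) = j%:R * mod2pi (k%:R * t).
    by rewrite -mod2piMnmr mod2pi_id //; apply/andP; split; lra.
  exists (j * k)%N; split; first by rewrite muln_gt0 j_gt0.
  rewrite natrM -mulrA mod2piN jd; first by apply/andP; split; lra.
  by rewrite gt_eqF //; lra.
- have [j [j_gt0 /andP[lo hi]]] := multiples_hit d_small c_ge0.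
  exists (j * k)%N; split; first by rewrite muln_gt0 j_gt0.
  rewrite natrM -mulrA -mulrN -mod2piMnmr mod2pi_id; first by apply/andP.
  by apply/andP; split; lra.
Qed.
End irrational_rotation.

End density.

Section arcs.
Variable R : realType.

Definition halfarc (s : R) : set R := [set u | mod2pi (u - s) < pi].

Lemma mod2piB_itv (x y : R) : 0 <= x < twopi -> 0 <= y < twopi ->
  mod2pi (x - y) = if y <= x then x - y else x - y + twopi.
Proof.
move=> /andP[? ?] /andP[? ?]; case: leP => ?.
  by rewrite mod2pi_id //; apply/andP; split; lra.
by rewrite mod2pi_neg //; apply/andP; split; lra.
Qed.

Lemma halfarcD_itv (s1 s2 u : R) : 0 <= s1 -> s1 < s2 < s1 + pi -> s2 < twopi ->
  0 <= u < twopi -> (halfarc s1 `\` halfarc s2) u <-> s1 <= u < s2.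
Proof.
move=> s1_ge0 /andP[s12 s21] s2_lt u_itv.
rewrite /halfarc /= !mod2piB_itv ?s1_ge0 ?(lt_trans s12) //=;
  try by apply/andP; split; lra.
have := pi_gt0 R; move: u_itv s2_lt; rewrite twopiE => /andP[? ?] ? ?.
by case: (leP s1 u) => ?; case: (leP s2 u) => ? /=;
  split => [[? ?]|_] //; try split; lra.
Qed.


Section arc_generation.
Variables (o : nat -> R) (Sigma : set (set R)).
Hypothesis o_dense : forall c eps : R, 0 <= c -> 0 < eps -> c + eps <= twopi ->
  exists n, c < o n < c + eps.
Hypothesis Sigma_sigma_algebra : sigma_algebra setT Sigma.
(* Sigma will be the image of an admissible sigma-algebra under [angle],
   whose values lie in [0, 2 pi). *)
Hypothesis Sigma_trace : forall X Y : set R,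
  (forall u : R, 0 <= u < twopi -> X u <-> Y u) -> Sigma X -> Sigma Y.
Hypothesis Sigma_halfarc : forall n, Sigma (halfarc (o n)).

Let Sigma0 : Sigma set0. Proof. by have [] := Sigma_sigma_algebra. Qed.

Let SigmaC X : Sigma X -> Sigma (~` X).
Proof. by have [_ SigmaTD _] := Sigma_sigma_algebra => /SigmaTD; rewrite setTD. Qed.

Let Sigma_bigcup (F : (set R)^nat) : (forall n, Sigma (F n)) -> Sigma (\bigcup_n F n).
Proof. by have [_ _] := Sigma_sigma_algebra; apply. Qed.

Let SigmaD X Y : Sigma X -> Sigma Y -> Sigma (X `\` Y).
Proof.
move=> SX SY; rewrite -[_ `\` _]setCK setDE setCI setCK.
by rewrite -bigcup2E; apply/SigmaC/Sigma_bigcup => -[|[|n]] //=; exact: SigmaC.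
Qed.

Lemma orbit_bracket u r : 0 < u < r -> r <= twopi -> exists n m,
  [/\ 0 < o n, o n <= u, u < o m, o m < r & o m < o n + pi].
Proof.
move=> /andP[u_gt0 ur] r_le; have pi_gt0 := pi_gt0 R.
pose eps := Num.min (u / 2) (Num.min ((r - u) / 2) (pi / 2)).
have eps_gt0 : 0 < eps by rewrite !lt_min !divr_gt0 ?subr_gt0.
have [eps_u eps_r eps_pi] : [/\ eps <= u / 2, eps <= (r - u) / 2 & eps <= pi / 2].
  by rewrite !ge_min !lexx !orbT.
have [|||n /andP[n_lo n_hi]] := o_dense (c := u - eps) (eps := eps); [lra..|].
have [|||m /andP[m_lo m_hi]] := o_dense (c := u) (eps := eps); [lra..|].
by exists n, m; split; lra.
Qed.


Lemma Sigma_arc r : 0 < r <= twopi -> Sigma [set u | 0 < u < r].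
Proof.
move=> /andP[r_gt0 r_le].
pose bracket n m := [/\ 0 < o n, o n < o m, o m < r & o m < o n + pi].
pose Y n m := if `[< bracket n m >] then halfarc (o n) `\` halfarc (o m) else set0.
apply: (@Sigma_trace (\bigcup_n \bigcup_m Y n m)).
  move=> u u_itv; split.
    move=> [n _ [m _]]; rewrite /Y; case: asboolP => // -[n_gt0 nm m_r m_pi].
    have nm_pi : o n < o m < o n + pi by apply/andP.
    move/(halfarcD_itv (ltW n_gt0) nm_pi (lt_le_trans m_r r_le) u_itv) => /andP[? ?].
    by apply/andP; split; lra.
  move=> u_arc; have [n [m [n_gt0 n_u u_m m_r m_pi]]] := orbit_bracket u_arc r_le.
  have nm_pi : o n < o m < o n + pi by apply/andP; split; lra.
  exists n => //; exists m => //; rewrite /Y asboolT; last by split; lra.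
  by apply/(halfarcD_itv (ltW n_gt0) nm_pi (lt_le_trans m_r r_le) u_itv); apply/andP.
apply: Sigma_bigcup => n; apply: Sigma_bigcup => m; rewrite /Y.
by case: ifP => _ //; apply: SigmaD.
Qed.

Lemma Sigma_ray r : Sigma [set u | u < r].
Proof.
have [r_le0|r_gt0] := leP r 0.
  by apply: (@Sigma_trace set0) Sigma0 => u /andP[? ?]; split => //=; lra.
have [twopi_lt|r_le] := ltP twopi r.
  apply: (@Sigma_trace setT); first by move=> u /andP[? ?]; split => //= _; lra.
  by rewrite -setC0; exact: SigmaC.
(* The angle 0 lies on no open arc; it is recovered by complementation. *)
apply: (@Sigma_trace (~` ([set u | 0 < u < twopi] `\` [set u | 0 < u < r]))).
  move=> u /andP[u_ge0 u_lt] /=; split => [nD|u_lt_r [/andP[u_gt0 _]]]; last first.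
    by apply; apply/andP.
  rewrite ltNge; apply/negP => r_le_u; apply: nD; split.
    by apply/andP; split; lra.
  by move=> /andP[? ?]; lra.
apply/SigmaC/SigmaD; apply: Sigma_arc; first by rewrite lexx twopi_gt0.
by apply/andP.
Qed.

Lemma Sigma_measurable (X : set R) : measurable X -> Sigma X.
Proof.
have -> : @measurable _ R = <<s @RGenInftyO.G R >> :=
  RGenInftyO.measurableE R.
apply: (smallest_sub Sigma_sigma_algebra) => _ [x ->].
rewrite (_ : `]-oo, x[%classic = [set u | u < x]); first exact: Sigma_ray.
by apply/seteqP; split => u /=; rewrite in_itv.
Qed.

End arc_generation.
End arcs.

Section kernel.
Variable R : realType.

Definition kernel_point (a x : R * R) : (R * R) * Delta := (f a x, g (f a x)).

Lemma Kset_cmul (a x : R * R) : Kset a -> Kset x -> Kset (cmul a x).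
Proof.
case: a x => [a1 a2] [x1 x2]; rewrite /Kset /cmul /= => a_unit x_unit.
by rewrite -[RHS]mul1r -{1}a_unit -x_unit; ring.
Qed.

Lemma A1_sub_Kset : A1 `<=` @Kset R.
Proof. by move=> p /A1_angle[]. Qed.

Lemma g_eq_d1 (y : R * R) : g y = d1 <-> A1 y.
Proof. by rewrite /g; case: ifPn => [/set_mem|/negP yA1] //; split => // /mem_set. Qed.

Section admissible.
Variables (a : R * R) (A : set (set (R * R))).
Hypotheses (Ka : Kset a) (A_admissible : admissible a A).

Lemma admissible_kernel_preimage C :
  prod_sigma A C -> A (Kset `&` kernel_point a @^-1` C).
Proof.
case: A_admissible => _ _ /[apply] /(_ [set 1] (measurable_set1 1)).
rewrite (_ : (fun x => T a x C) = \1_C \o kernel_point a) // comp_preimage preimage_indic.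
by rewrite mem_set // memNset //=; apply/eqP; rewrite eq_sym oner_neq0.
Qed.

Lemma admissible_rotation X : A X -> A (Kset `&` cmul a @^-1` X).
Proof.
move=> AX; have /admissible_kernel_preimage : prod_sigma A (X `*` setT).
  by apply: sub_sigma_algebra; exists X, setT.
by congr A; apply/seteqP; split => x [Kx]; [case|split].
Qed.

Lemma admissible_A1_rotation : A (Kset `&` cmul a @^-1` A1).
Proof.
have /admissible_kernel_preimage : prod_sigma A (Kset `*` [set d1]).
  apply: sub_sigma_algebra; exists Kset, [set d1]; split => //.
  by have [[A0 AD _] _ _] := A_admissible; rewrite -(setD0 Kset); exact: AD A0.
congr A; apply/seteqP; split => x [Kx Ax]; split => //.
  by case: Ax => _ /g_eq_d1.
by split; [exact: A1_sub_Kset|exact/g_eq_d1].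
Qed.

Lemma admissible_iter_A1 n : (0 < n)%N -> A (Kset `&` iter n (cmul a) @^-1` A1).
Proof.
case: n => // n _; elim: n => [|n IHn]; first exact: admissible_A1_rotation.
rewrite (_ : iter n.+2 (cmul a) = iter n.+1 (cmul a) \o cmul a); last first.
  by apply/funext => x; exact: iterSr.
have /admissible_rotation := IHn; congr A; apply/seteqP.
by split => x [Kx]; [case|split => //; split => //; exact: Kset_cmul].
Qed.

End admissible.
End kernel.

Section lower_bound.
Variable R : realType.

Lemma A1_expi (w : R) : A1 (expi w) <-> mod2pi w < pi.
Proof.
by rewrite A1_angle angle_expi; split => [[]|] //; split => //; exact: Kset_expi.
Qed.

Lemma measurable_expi : measurable_fun setT (@expi R).
Proof.
by apply: measurable_fun_pair; apply: continuous_measurable_fun;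
  [exact: continuous_cos|exact: continuous_sin].
Qed.

Lemma admissible_halfarc (t : R) A n : admissible (expi t) A -> (0 < n)%N ->
  A (Kset `&` angle @^-1` halfarc (mod2pi (- (n%:R * t)))).
Proof.
move=> A_adm /(admissible_iter_A1 (Kset_expi t) A_adm); congr A.
apply/seteqP; split => x [Kx]; rewrite /= -[in A1 _](expi_angle Kx) iter_cmul_expi;
  by rewrite A1_expi /halfarc /= mod2piBmr opprK.
Qed.

Lemma Qsig_sub_admissible (t : R) A : ~ circ_root_of_unity (expi t) ->
  admissible (expi t) A -> Qsig `<=` A.
Proof.
move=> t_irr A_adm B [mB BK].
have [A_sigma _ _] := A_adm.
pose Sigma := image_set_system Kset angle A.
have Sigma_trace X Y : (forall u, 0 <= u < twopi -> X u <-> Y u) -> Sigma X -> Sigma Y.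
  move=> XY; congr A; apply/seteqP; split => x [Kx] /XY;
    by rewrite angle_itv => /(_ isT) ? //; apply.
have o_dense (c eps : R) : 0 <= c -> 0 < eps -> c + eps <= twopi ->
    exists n, c < mod2pi (- (n.+1%:R * t)) < c + eps.
  move=> c_ge0 eps_gt0 ceps.
  have [[|n] [//]] := orbit_dense (mod2pi_orbit_neq0 t_irr) c_ge0 eps_gt0 ceps.
  by exists n.
have : Sigma (expi @^-1` B).
  apply: (Sigma_measurable o_dense (sigma_algebra_image _ A_sigma) Sigma_trace).
    by move=> n; exact: admissible_halfarc.
  by rewrite -[expi @^-1` B]setTI; exact: measurable_expi.
congr A; apply/seteqP; split => [x [Kx /=]|x Bx]; first by rewrite expi_angle.
by split; [exact: BK|rewrite /= expi_angle //; exact: BK].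
Qed.

End lower_bound.

Section upper_bound.
Variable R : realType.

Lemma measurable_Kset : measurable (@Kset R).
Proof.
have m_norm2 : measurable_fun setT (fun p : R * R => p.1 ^+ 2 + p.2 ^+ 2).
  by apply: measurable_funD; apply: measurable_funX;
    [exact: measurable_fst|exact: measurable_snd].
by rewrite -[Kset]setTI; exact: m_norm2 measurableT _ (measurable_set1 1).
Qed.

Lemma measurable_cmul (a : R * R) : measurable_fun setT (cmul a).
Proof.
by apply: measurable_fun_pair; [apply: measurable_funB|apply: measurable_funD];
  apply: measurable_funM;
  (exact: measurable_cst || exact: measurable_fst || exact: measurable_snd).
Qed.

Lemma sigma_algebra_Qsig : sigma_algebra Kset (@Qsig R).
Proof.
split.
- by split; [exact: measurable0|].
- by move=> B [mB _]; split; [exact: measurableD measurable_Kset mB|move=> x []].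
- move=> F QF; split.
    by apply: bigcupT_measurable => n; have [] := QF n.
  by apply: bigcup_sub => n _; have [] := QF n.
Qed.


Lemma A1_coord (p : R * R) : A1 p <-> Kset p /\ (p = (1, 0) \/ 0 < p.2).
Proof.
rewrite A1_angle; split=> -[Kp].
all: have sinE : sin (angle p) = p.2 by rewrite -[in RHS](expi_angle Kp).
  by move/(ltpi_expi (angle_itv p)); rewrite expi_angle // sinE.
by rewrite -sinE -{1}(expi_angle Kp) -ltpi_expi ?angle_itv.
Qed.

Lemma measurable_A1 : measurable (@A1 R).
Proof.
rewrite (_ : A1 = Kset `&` ([set 1] `*` [set 0] `|` snd @^-1` `]0, +oo[)).
  apply: measurableI; first exact: measurable_Kset.
  apply: measurableU; first by apply: measurableX; exact: measurable_set1.
  by rewrite -[snd @^-1` _]setTI; apply: measurable_snd => //; exact: measurable_itv.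
apply/seteqP; split => [p /A1_coord[Kp p_cond]|[p1 p2] [Kp [[/= -> ->]|]]].
- split => //; case: p_cond => [->|p2_gt0]; [by left|right].
  by rewrite /= in_itv /= andbT.
- by apply/A1_coord; split; [rewrite -expi0; exact: Kset_expi|left].
- rewrite /= in_itv /= andbT => p2_gt0.
  by apply/A1_coord; split => //; right.
Qed.

Lemma measurable_g_preimage (Y : set Delta) : measurable (@g R @^-1` Y).
Proof.
have measurable_cst_set (P : Prop) : measurable [set _ : R * R | P].
  have [p|np] := pselect P.
    by rewrite (_ : [set _ | P] = setT) //; apply/seteqP; split.
  by rewrite (_ : [set _ | P] = set0) //; apply/seteqP; split.
rewrite (_ : g @^-1` Y = (A1 `&` [set _ | Y d1]) `|` (~` A1 `&` [set _ | Y d2])).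
  by apply: measurableU; apply: measurableI => //;
    [|apply: measurableC]; exact: measurable_A1.
by apply/seteqP; split => x; rewrite /preimage /g /=;
  case: ifPn => [/set_mem|/negP]; rewrite ?in_setE; tauto.
Qed.

Lemma measurable_kernel_preimage (a : R * R) C : Kset a -> prod_sigma Qsig C ->
  measurable (Kset `&` kernel_point a @^-1` C).
Proof.
move=> Ka; suff : prod_sigma Qsig `<=` image_set_system Kset (kernel_point a) Qsig.
  by move/[apply] => -[].
apply: smallest_sub.
  apply: sigma_algebra_image_into sigma_algebra_Qsig => x Kx.
  by split => //; exact: Kset_cmul.
move=> _ [X [Y [[mX _] ->]]]; split; last exact: subIsetl.
apply: measurableI; first exact: measurable_Kset.
rewrite (_ : kernel_point a @^-1` _ = setT `&` cmul a @^-1` (X `&` g @^-1` Y)).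
  apply: (measurable_cmul a measurableT).
  exact: measurableI mX (measurable_g_preimage Y).
by rewrite setTI.
Qed.

Lemma Qsig_admissible (a : R * R) : Kset a -> admissible a Qsig.
Proof.
move=> Ka; split => //; first exact: sigma_algebra_Qsig.
move=> C C_prod B mB; split; last exact: subIsetl.
have mKC := measurable_kernel_preimage Ka C_prod.
rewrite (_ : (fun x => T a x C) = \1_C \o kernel_point a) // comp_preimage preimage_indic.
case: ifPn => _; case: ifPn => _; rewrite ?preimage_setT ?preimage_set0 ?setIT ?setI0 //.
- exact: measurable_Kset.
- rewrite (_ : _ `&` _ = Kset `\` (Kset `&` kernel_point a @^-1` C)).
    exact: measurableD measurable_Kset mKC.
  apply/seteqP; split => x [Kx nCx]; split => //; first by case=> _ /nCx.
  by move=> Cx; apply: nCx.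
Qed.

End upper_bound.

Theorem mainTheorem11 (R : realType) (a : R * R) :
  Kset a -> ~ circ_root_of_unity a -> sigmaQ a = @Qsig R.
Proof.
move=> Ka a_irr; apply/seteqP; split => [B|B QB A A_adm].
  by apply; exact: Qsig_admissible.
rewrite -(expi_angle Ka) in a_irr A_adm.
exact: Qsig_sub_admissible a_irr A_adm B QB.
Qed.
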